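(* Let $f\in C^{1,1}_L(\mathbb{R}^n)$. For all $(u_1,u_2)\in\mathbb{R}^n\times\mathbb{R}^n$ and every matrix $H\in\mathbb{R}^{n\times n}$, $$\psi(u_1,u_2,H):=f(u_1)-f(u_2)-\tfrac{1}{2L}\langle (LI-H)(u_1-u_2),\nabla f(u_1)\rangle-\tfrac{1}{2L}\langle (LI+H)(u_1-u_2),\nabla f(u_2)\rangle-\tfrac{1}{4L}\|H(u_1-u_2)\|^2-\tfrac{L}{4}\|u_1-u_2\|^2\le 0 .$$
   Context: Let $L>0$. $C^{1,1}_L(\mathbb{R}^n)$ denotes the set of differentiable functions $f:\mathbb{R}^n\to\mathbb{R}$ with $\|\nabla f(u_1)-\nabla f(u_2)\|\le L\|u_1-u_2\|$ for all $u_1,u_2\in\mathbb{R}^n$ (Euclidean norm). *)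

From HB Require Import structures.
From mathcomp Require Import all_boot all_order all_algebra.
From mathcomp Require Import all_classical all_reals all_analysis.
Set Implicit Arguments. Unset Strict Implicit. Unset Printing Implicit Defensive.
Import Order.TTheory GRing.Theory Num.Theory.
Import numFieldNormedType.Exports.
Local Open Scope ring_scope.

Definition dotv {R : realType} {n : nat} (u v : 'rV[R]_n) : R :=
  \sum_(i < n) u ord0 i * v ord0 i.
Definition enorm {R : realType} {n : nat} (u : 'rV[R]_n) : R :=
  Num.sqrt (dotv u u).

(* Gradient: the vector of partial derivatives, i.e. the Riesz representative
   of the Frechet differential 'd f u w.r.t. the Euclidean inner product. *)
Definition grad {R : realType} {n : nat} (f : 'rV[R]_n -> R) (u : 'rV[R]_n)
  : 'rV[R]_n := \row_(i < n) ('d f u) (delta_mx ord0 i).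

(* Matrix-vector product H x (x viewed as a column vector). *)
Definition mxapp {R : realType} {n : nat} (H : 'M[R]_n) (x : 'rV[R]_n)
  : 'rV[R]_n := x *m H^T.

Definition C11 {R : realType} {n : nat} (L : R) (f : 'rV[R]_n -> R) : Prop :=
  (forall u, differentiable f u) /\
  (forall u1 u2, enorm (grad f u1 - grad f u2) <= L * enorm (u1 - u2)).

From HB Require Import structures.
From mathcomp Require Import all_boot all_order all_algebra.
From mathcomp Require Import all_classical all_reals all_analysis.
From mathcomp Require Import ring lra.
Import Order.TTheory GRing.Theory Num.Theory.
Import numFieldNormedType.Exports.
Local Open Scope ring_scope.

(* For f in C^{1,1}_L the first-order Taylor remainder obeys the two-sided
   descent bound |f y - f x - <grad f x, y - x>| <= L/2 |y - x|^2.  Using the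
   upper bound at u2 and the lower bound at u1 for one common point z gives
     f u1 - f u2 <= <g2, z - u2> - <g1, z - u1>
                    + L/2 (|z - u2|^2 + |z - u1|^2),
   and for z = (u1 + u2)/2 + (g1 - g2)/(2L) this bound turns psi into
   -|H(u1 - u2) - (g1 - g2)|^2 / (4L). *)

Section Dotv.
Context {R : realType} {n : nat}.
Implicit Types (a b c : 'rV[R]_n) (k : R).

Lemma dotvC a b : dotv a b = dotv b a.
Proof. by apply: eq_bigr => i _; rewrite mulrC. Qed.

Lemma dotvDl a b c : dotv (a + b) c = dotv a c + dotv b c.
Proof. by rewrite /dotv -big_split; apply: eq_bigr => i _; rewrite !mxE mulrDl. Qed.

Lemma dotvNl a c : dotv (- a) c = - dotv a c.
Proof. by rewrite /dotv -sumrN; apply: eq_bigr => i _; rewrite !mxE mulNr. Qed.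

Lemma dotvBl a b c : dotv (a - b) c = dotv a c - dotv b c.
Proof. by rewrite dotvDl dotvNl. Qed.

Lemma dotvZl k a c : dotv (k *: a) c = k * dotv a c.
Proof. by rewrite /dotv mulr_sumr; apply: eq_bigr => i _; rewrite !mxE mulrA. Qed.

Lemma dotvDr a b c : dotv c (a + b) = dotv c a + dotv c b.
Proof. by rewrite dotvC dotvDl !(dotvC c). Qed.

Lemma dotvNr a c : dotv c (- a) = - dotv c a.
Proof. by rewrite dotvC dotvNl dotvC. Qed.

Lemma dotvBr a b c : dotv c (a - b) = dotv c a - dotv c b.
Proof. by rewrite dotvDr dotvNr. Qed.

Lemma dotvZr k a c : dotv c (k *: a) = k * dotv c a.
Proof. by rewrite dotvC dotvZl dotvC. Qed.

Lemma dotvv_ge0 a : 0 <= dotv a a.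
Proof. by apply: sumr_ge0 => i _; rewrite -expr2 sqr_ge0. Qed.

Lemma enorm_ge0 a : 0 <= enorm a.
Proof. exact: sqrtr_ge0. Qed.

Lemma enorm_sqr a : enorm a ^+ 2 = dotv a a.
Proof. by rewrite /enorm sqr_sqrtr // dotvv_ge0. Qed.

Lemma enormZ k a : enorm (k *: a) = `|k| * enorm a.
Proof. by rewrite /enorm dotvZl dotvZr mulrA -expr2 sqrtrM ?sqr_ge0 // sqrtr_sqr. Qed.

(* A form of Cauchy-Schwarz: expand 0 <= <a - k b, a - k b>. *)
Lemma dotv_le_of_sqr k a b : 0 < k -> dotv a a <= k ^+ 2 * dotv b b ->
  dotv a b <= k * dotv b b.
Proof.
move=> k_gt0 aa_le; have := dotvv_ge0 (a - k *: b).
rewrite !(dotvBl, dotvBr, dotvZl, dotvZr) (dotvC b a) => sq_ge0.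
have : k * (2 * dotv a b) <= k * (2 * (k * dotv b b)) by nra.
by rewrite ler_pM2l // ler_pM2l.
Qed.

End Dotv.

Lemma mxappD {R : realType} {n : nat} (A B : 'M[R]_n) (x : 'rV[R]_n) :
  mxapp (A + B) x = mxapp A x + mxapp B x.
Proof. by rewrite /mxapp linearD /= mulmxDr. Qed.

Lemma mxappB {R : realType} {n : nat} (A B : 'M[R]_n) (x : 'rV[R]_n) :
  mxapp (A - B) x = mxapp A x - mxapp B x.
Proof. by rewrite /mxapp linearB /= mulmxBr. Qed.

Lemma mxapp_scalar {R : realType} {n : nat} (a : R) (x : 'rV[R]_n) :
  mxapp a%:M x = a *: x.
Proof. by rewrite /mxapp tr_scalar_mx mul_mx_scalar. Qed.

Lemma diff_dotv_grad {R : realType} {n : nat} (f : 'rV[R]_n -> R) (u v : 'rV[R]_n) :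
  'd f u v = dotv (grad f u) v.
Proof.
rewrite [v in LHS]row_sum_delta linear_sum /dotv.
by apply: eq_bigr => i _; rewrite linearZ /= mxE mulrC.
Qed.

Lemma is_derive_line {R : realType} {n : nat} (f : 'rV[R]_n -> R) (x d : 'rV[R]_n) (t : R) :
  differentiable f (x + t *: d) ->
  is_derive t 1 (fun s : R => f (x + s *: d)) (dotv (grad f (x + t *: d)) d).
Proof.
move=> df; rewrite -diff_dotv_grad.
(* [dline] and [df'] are picked up as instances by [diff_val] below. *)
have dline : is_diff t (cst x + ( *:%R^~ d) : R -> 'rV[R]_n) (0 + ( *:%R^~ d)).
  exact: is_diffD.
have df' : is_diff (x + t *: d) f ('d f (x + t *: d)) by apply: DiffDef.
have -> : (fun s : R => f (x + s *: d)) = f \o (cst x + ( *:%R^~ d)) by [].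
apply: DeriveDef; first exact: diff_derivable.
by rewrite deriveE // diff_val /= add0r scale1r.
Qed.

Section Descent.
Context {R : realType} {n : nat} {L : R} {f : 'rV[R]_n -> R}.
Hypotheses (L_gt0 : 0 < L) (f_C11 : C11 L f).

(* [s] is a sign, so that both halves of the two-sided bound share one proof:
   phi u := s f (x + u d) - s <grad f x, d> u - L/2 |d|^2 u^2 is nonincreasing. *)
Lemma descent_signed (x y : 'rV[R]_n) (s : R) : s ^+ 2 = 1 ->
  s * (f y - f x - dotv (grad f x) (y - x)) <= L / 2 * dotv (y - x) (y - x).
Proof.
move=> s2; have [f_diff grad_lip] := f_C11.
set d := y - x; set D := dotv d d; set c := dotv (grad f x) d.
pose phi u := s * f (x + u *: d) - s * c * u - L / 2 * D * u ^+ 2.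
have phi_derive (t : R) : is_derive t 1 phi
    (s * dotv (grad f (x + t *: d)) d - s * c - L / 2 * D * (2 * t)).
  have := is_deriveB (is_deriveB (is_deriveZ s (is_derive_line f x d t (f_diff _)))
    (is_deriveZ (s * c) (@is_derive_id _ _ t 1)))
    (is_deriveZ (L / 2 * D) (@is_deriveX _ _ id 2 t 1 1 (@is_derive_id _ _ t 1))).
  by move=> h; apply: is_derive_eq h _; rewrite /GRing.scale /= !mulr1 expr1.
have phi_derivable (t : R) : derivable phi t 1.
  exact: @ex_derive _ _ _ _ _ _ _ (phi_derive t).
have phi_slope_le0 (t : R) : 0 < t < 1 -> derive1 phi t <= 0.
  move=> /andP[t_gt0 _]; rewrite derive1E (@derive_val _ _ _ _ _ _ _ (phi_derive t)).
  set w := grad f (x + t *: d) - grad f x.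
  have w_le : enorm w <= L * t * enorm d.
    have e : x + t *: d - x = t *: d by rewrite addrC addKr.
    by have := grad_lip (x + t *: d) x; rewrite e enormZ gtr0_norm // mulrA.
  have sw_sqr : dotv (s *: w) (s *: w) <= (L * t) ^+ 2 * D.
    rewrite dotvZl dotvZr mulrA -expr2 s2 mul1r /D -!enorm_sqr -exprMn.
    apply: lerXn2r => //; rewrite nnegrE ?enorm_ge0 //.
    exact: mulr_ge0 (mulr_ge0 (ltW L_gt0) (ltW t_gt0)) (enorm_ge0 d).
  have := dotv_le_of_sqr _ _ _ (mulr_gt0 L_gt0 t_gt0) sw_sqr.
  have -> : dotv (grad f (x + t *: d)) d = dotv w d + c by rewrite dotvBl subrK.
  rewrite dotvZl -/D; lra.
have phi_mono : phi 1 <= phi 0.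
  apply: (ler0_derive1_nincr (fun t _ => phi_derivable t) _
    (derivable_within_continuous (fun t _ => phi_derivable t))) => //.
  by move=> t; rewrite in_itv /=; apply: phi_slope_le0.
have x_add_d : x + d = y by rewrite addrC subrK.
move: phi_mono; rewrite /phi scale0r scale1r addr0 x_add_d expr1n expr0n /=.
lra.
Qed.

Lemma descent (x y : 'rV[R]_n) :
  `|f y - f x - dotv (grad f x) (y - x)| <= L / 2 * dotv (y - x) (y - x).
Proof.
apply/ler_normlP; split.
  by rewrite -mulN1r descent_signed // sqrrN expr1n.
by rewrite -[X in X <= _]mul1r descent_signed // expr1n.
Qed.

Lemma descent_two_point (u1 u2 z : 'rV[R]_n) :
  f u1 - f u2 <= dotv (grad f u2) (z - u2) - dotv (grad f u1) (z - u1)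
    + L / 2 * (dotv (z - u2) (z - u2) + dotv (z - u1) (z - u1)).
Proof.
have /ler_normlP[_ upper] := descent u2 z.
have /ler_normlP[lower _] := descent u1 z.
lra.
Qed.
End Descent.

Lemma psi_majorant_eq {R : realType} {n : nat} {L : R} (u1 u2 g1 g2 v : 'rV[R]_n) :
  L != 0 ->
  let z := 2^-1 *: (u1 + u2) + (2 * L)^-1 *: (g1 - g2) in
  dotv g2 (z - u2) - dotv g1 (z - u1)
  + L / 2 * (dotv (z - u2) (z - u2) + dotv (z - u1) (z - u1))
  - (2 * L)^-1 * (L * dotv (u1 - u2) g1 - dotv v g1)
  - (2 * L)^-1 * (L * dotv (u1 - u2) g2 + dotv v g2)
  - (4 * L)^-1 * dotv v v - L / 4 * dotv (u1 - u2) (u1 - u2)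
  = - ((4 * L)^-1 * dotv (v - (g1 - g2)) (v - (g1 - g2))).
Proof.
move=> L_neq0 z; rewrite /z !(dotvDl, dotvDr, dotvNl, dotvNr, dotvZl, dotvZr).
rewrite (dotvC u2 u1) (dotvC g1 u1) (dotvC g2 u1) (dotvC g1 u2) (dotvC g2 u2).
rewrite (dotvC g2 g1) (dotvC v g1) (dotvC v g2).
by field; rewrite L_neq0.
Qed.

Theorem lemma4p4 (R : realType) (n : nat) (L : R) (hL : 0 < L)
  (f : 'rV[R]_n -> R) (hf : C11 L f)
  (u1 u2 : 'rV[R]_n) (H : 'M[R]_n) :
  f u1 - f u2
  - (2 * L)^-1 * dotv (mxapp (L%:M - H) (u1 - u2)) (grad f u1)
  - (2 * L)^-1 * dotv (mxapp (L%:M + H) (u1 - u2)) (grad f u2)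
  - (4 * L)^-1 * enorm (mxapp H (u1 - u2)) ^+ 2
  - L / 4 * enorm (u1 - u2) ^+ 2 <= 0.
Proof.
have := descent_two_point hL hf u1 u2
  (2^-1 *: (u1 + u2) + (2 * L)^-1 *: (grad f u1 - grad f u2)).
rewrite (mxappB L%:M) (mxappD L%:M) !mxapp_scalar !enorm_sqr.
move: (grad f u1) (grad f u2) (mxapp H (u1 - u2)) => g1 g2 v.
rewrite (dotvBl _ v g1) (dotvDl _ v g2) (dotvZl L _ g1) (dotvZl L _ g2).
have := psi_majorant_eq u1 u2 g1 g2 v (lt0r_neq0 hL).
have : 0 <= (4 * L)^-1 * dotv (v - (g1 - g2)) (v - (g1 - g2)).
  by rewrite mulr_ge0 ?dotvv_ge0 // invr_ge0 mulr_ge0 // ltW.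
move=> /=; lra.
Qed.
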